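(* For any constant $\varepsilon\in(0,\eta)$, let $c_\varepsilon=\min\{2\eta-2\varepsilon,1\}$. Then the set $E_{c_\varepsilon}=\{(x_1,\dots,x_n)\in[0,1]^n:\max_{i,j\in\mathcal V}|x_i-x_j|\ge c_\varepsilon\}$ is finite-time robustly reachable from $[0,1]^n$ under both control protocols (C1) and (C3).
   Context: Fix $n\ge3$, $\mathcal V=\{1,\dots,n\}$, confidence thresholds $r_i\in(0,1]$, belief factors $\omega_i\in(0,1)$, $\eta>0$. States $x(t)\in[0,1]^n$. Neighbor set $\mathcal N_i(t)=\{j:|x_j(t)-x_i(t)|\le r_i\}$ (contains $i$), $\Pi_{[0,1]}(y)=\min\{1,\max\{0,y\}\}$, $x_{\rm ave}(t)=\frac1n\sum_ix_i(t)$. Control protocol (C1): $x_i(t+1)=\Pi_{[0,1]}\big(|\mathcal N_i(t)|^{-1}\sum_{j\in\mathcal N_i(t)}x_j(t)+u_i(t)+b_i(t)\big)$. Control protocol (C3): $x_i(t+1)=\Pi_{[0,1]}\big(\omega_ix_{\rm ave}(t)+\frac{1-\omega_i}{|\mathcal N_i(t)|}\sum_{j\in\mathcal N_i(t)}x_j(t)+u_i(t)+b_i(t)\big)$. Here $\delta_i(t)\in(0,\eta)$ is a chosen parameter, $u_i(t)\in[-\eta+\delta_i(t),\eta-\delta_i(t)]$ a chosen control input, $b_i(t)\in[-\delta_i(t),\delta_i(t)]$ an arbitrary uncertainty; $\delta_i(t),u_i(t)$ may depend on $x(0),\dots,x(t)$. A set $S\subseteq[0,1]^n$ is finite-time robustly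 reachable from $[0,1]^n$ under a control protocol if there exist constants $T>0$ and $\varepsilon'\in(0,\eta)$, independent of $x(0)$, such that for every $x(0)\in[0,1]^n$, either $x(0)\in S$, or one can choose $\delta_i(t)\in[\varepsilon',\eta)$ and $u_i(t)\in[-\eta+\delta_i(t),\eta-\delta_i(t)]$ for $i\in\mathcal V$, $0\le t<T$, guaranteeing that for arbitrary $b_i(t)\in[-\delta_i(t),\delta_i(t)]$ there is $t\in[1,T]$ with $x(t)\in S$. *)

From Stdlib Require Import Reals List.
Import ListNotations.
Open Scope R_scope.

(* A state is a vector indexed by agents 0..n-1 (entries at i >= n are irrelevant). *)
Definition state := nat -> R.

Definition sumR (l : list nat) (x : state) : R :=
  fold_right (fun j acc => x j + acc) 0 l.

Definition nbrs (n : nat) (r : nat -> R) (x : state) (i : nat) : list nat :=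
  filter (fun j => if Rle_dec (Rabs (x j - x i)) (r i) then true else false)
         (seq 0 n).

Definition nbr_avg (n : nat) (r : nat -> R) (x : state) (i : nat) : R :=
  sumR (nbrs n r x i) x / INR (length (nbrs n r x i)).

Definition x_ave (n : nat) (x : state) : R := sumR (seq 0 n) x / INR n.

Definition proj01 (y : R) : R := Rmin 1 (Rmax 0 y).

(* the un-projected, control-free part of the protocols *)
Definition proto_C1 (n : nat) (r : nat -> R) : state -> nat -> R := nbr_avg n r.
Definition proto_C3 (n : nat) (r omega : nat -> R) (x : state) (i : nat) : R :=
  omega i * x_ave n x + (1 - omega i) / INR (length (nbrs n r x i))
                          * sumR (nbrs n r x i) x.

Definition in_cube (n : nat) (x : state) : Prop :=
  forall i, (i < n)%nat -> 0 <= x i <= 1.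

Definition max_diff (n : nat) (x : state) : R :=
  fold_right Rmax 0
    (flat_map (fun i => map (fun j => Rabs (x i - x j)) (seq 0 n)) (seq 0 n)).

Definition E_c (n : nat) (c : R) (x : state) : Prop :=
  in_cube n x /\ max_diff n x >= c.

(* History (newest state first) x(k) :: ... :: x(0), generated by the
   protocol f, control input u (a function of the history), and
   uncertainty sequence b. x(k+1)_i = Pi(f(x(k))_i + u_i(k) + b_i(k)). *)
Fixpoint hist (f : state -> nat -> R) (u : list state -> nat -> R)
  (b : nat -> nat -> R) (x0 : state) (k : nat) : list state :=
  match k with
  | O => [x0]
  | S k' => let h := hist f u b x0 k' in
            (fun i => proj01 (f (hd x0 h) i + u h i + b k' i)) :: h
  end.

Definition traj f u b x0 k : state := hd x0 (hist f u b x0 k).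

(* Finite-time robust reachability of S from [0,1]^n under protocol f.
   delta and u are feedback policies on the full history x(0..t). *)
Definition robustly_reachable (n : nat) (eta : R) (f : state -> nat -> R)
  (S : state -> Prop) : Prop :=
  exists (T : nat) (eps' : R),
    (0 < T)%nat /\ 0 < eps' < eta /\
    forall x0 : state, in_cube n x0 ->
      S x0 \/
      exists delta u : list state -> nat -> R,
        (forall h i, eps' <= delta h i < eta /\
                     - (eta - delta h i) <= u h i <= eta - delta h i) /\
        forall b : nat -> nat -> R,
          (forall t i, (t < T)%nat -> (i < n)%nat ->
             Rabs (b t i) <= delta (hist f u b x0 t) i) ->
          exists t, (1 <= t <= T)%nat /\ S (traj f u b x0 t).

(* Both protocols are "confined": the uncontrolled update of agent i is a
   convex combination of agents' states, so it stays in every interval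
   containing all states.  The controller first uses the clamped input
   clamp (eta - d) (1/2 - f x i), which, whatever the uncertainty, moves every
   agent at least eta - 2d closer to 1/2 until all agents are within d of 1/2.
   In one more step it pushes agent 0 up and agent 1 down by eta - d; with
   d = eps / 3 their distance then becomes at least min (2 eta - 2 eps) 1. *)

From Stdlib Require Import Reals Lra Lia List Arith.
Import ListNotations.
Open Scope R_scope.

Definition clamp (c y : R) : R := Rmax (- c) (Rmin c y).

Definition confined (n : nat) (f : state -> nat -> R) : Prop :=
  forall x a b i, (i < n)%nat ->
    (forall j, (j < n)%nat -> a <= x j <= b) -> a <= f x i <= b.

Ltac solve_piecewise :=
  unfold clamp, proj01, Rmin, Rmax in *;
  repeat destruct Rle_dec; try split_Rabs; lra.

Lemma clamp_range c y : 0 <= c -> - c <= clamp c y <= c.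
Proof. intros; solve_piecewise. Qed.

Lemma proj01_range y : 0 <= proj01 y <= 1.
Proof. solve_piecewise. Qed.

Lemma proj01_steer_half v D b d eta :
  0 <= d -> d <= eta - d -> Rabs (v - /2) <= D -> Rabs b <= d ->
  Rabs (proj01 (v + clamp (eta - d) (/2 - v) + b) - /2)
  <= Rmax d (D - (eta - 2 * d)).
Proof. intros; solve_piecewise. Qed.

Lemma proj01_push_apart v0 v1 b0 b1 d eta eps :
  0 < eps < eta -> 0 <= d -> 3 * d <= eps ->
  Rabs (v0 - /2) <= d -> Rabs (v1 - /2) <= d -> Rabs b0 <= d -> Rabs b1 <= d ->
  Rmin (2 * eta - 2 * eps) 1 <=
  Rabs (proj01 (v0 + (eta - d) + b0) - proj01 (v1 + - (eta - d) + b1)).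
Proof. intros; solve_piecewise. Qed.

Lemma sumR_bounds l x a b : (forall j, In j l -> a <= x j <= b) ->
  INR (length l) * a <= sumR l x <= INR (length l) * b.
Proof.
  induction l as [|j l IH]; intros Hl; simpl sumR; simpl length.
  - simpl; lra.
  - rewrite S_INR.
    pose proof (Hl j (or_introl eq_refl)).
    pose proof (IH (fun k Hk => Hl k (or_intror Hk))).
    lra.
Qed.

Lemma average_bounds l x a b : l <> [] ->
  (forall j, In j l -> a <= x j <= b) -> a <= sumR l x / INR (length l) <= b.
Proof.
  intros Hne Hl.
  assert (Hlen : 0 < INR (length l)).
  { apply lt_0_INR; destruct l; [congruence | simpl; lia]. }
  destruct (sumR_bounds l x a b Hl).
  split; apply Rmult_le_reg_r with (INR (length l)); auto;
    unfold Rdiv; rewrite Rmult_assoc, Rinv_l by lra; lra.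
Qed.

Lemma nbrs_self n r x i : (i < n)%nat -> 0 <= r i -> In i (nbrs n r x i).
Proof.
  intros Hi Hr. apply filter_In. split.
  - apply in_seq; lia.
  - destruct Rle_dec as [|Hnot]; [reflexivity|].
    exfalso; apply Hnot; rewrite Rminus_diag, Rabs_R0; exact Hr.
Qed.

Lemma nbrs_lt n r x i j : In j (nbrs n r x i) -> (j < n)%nat.
Proof. intros Hj; apply filter_In, proj1, in_seq in Hj; lia. Qed.

Lemma nbr_avg_bounds n r x i a b : (i < n)%nat -> 0 <= r i ->
  (forall j, (j < n)%nat -> a <= x j <= b) -> a <= nbr_avg n r x i <= b.
Proof.
  intros Hi Hr Hx. apply average_bounds.
  - intros Hnil; pose proof (nbrs_self n r x i Hi Hr) as Hself.
    rewrite Hnil in Hself; destruct Hself.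
  - intros j Hj; apply Hx; exact (nbrs_lt n r x i j Hj).
Qed.

Lemma x_ave_bounds n x a b : (0 < n)%nat ->
  (forall j, (j < n)%nat -> a <= x j <= b) -> a <= x_ave n x <= b.
Proof.
  intros Hn Hx. unfold x_ave. rewrite <- (length_seq n 0) at 2 4.
  apply average_bounds.
  - destruct n; [lia | discriminate].
  - intros j Hj; apply Hx; apply in_seq in Hj; lia.
Qed.

Lemma proto_C1_confined n r :
  (forall i, (i < n)%nat -> 0 <= r i) -> confined n (proto_C1 n r).
Proof. intros Hr x a b i Hi; apply nbr_avg_bounds; auto. Qed.

Lemma proto_C3_confined n r omega :
  (forall i, (i < n)%nat -> 0 <= r i) ->
  (forall i, (i < n)%nat -> 0 < omega i < 1) ->
  confined n (proto_C3 n r omega).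
Proof.
  intros Hr Ho x a b i Hi Hx.
  assert (Hlen : 0 < INR (length (nbrs n r x i))).
  { apply lt_0_INR; pose proof (nbrs_self n r x i Hi (Hr i Hi)) as Hself.
    destruct (nbrs n r x i); [destruct Hself | simpl; lia]. }
  pose proof (x_ave_bounds n x a b ltac:(lia) Hx) as Have.
  pose proof (nbr_avg_bounds n r x i a b Hi (Hr i Hi) Hx) as Hnbr.
  unfold nbr_avg in Hnbr. unfold proto_C3.
  replace ((1 - omega i) / INR (length (nbrs n r x i)) * sumR (nbrs n r x i) x)
    with ((1 - omega i) * (sumR (nbrs n r x i) x / INR (length (nbrs n r x i))))
    by (field; lra).
  specialize (Ho i Hi). nra.
Qed.

Lemma confined_near_half n f x i D : confined n f -> (i < n)%nat ->
  (forall j, (j < n)%nat -> Rabs (x j - /2) <= D) -> Rabs (f x i - /2) <= D.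
Proof.
  intros Hf Hi Hx.
  assert (/2 - D <= f x i <= /2 + D).
  { apply Hf; auto. intros j Hj; specialize (Hx j Hj); split_Rabs; lra. }
  split_Rabs; lra.
Qed.

Lemma max_diff_ge n x i j : (i < n)%nat -> (j < n)%nat ->
  Rabs (x i - x j) <= max_diff n x.
Proof.
  intros Hi Hj. unfold max_diff.
  assert (Hin : In (Rabs (x i - x j))
     (flat_map (fun i => map (fun j => Rabs (x i - x j)) (seq 0 n)) (seq 0 n))).
  { apply in_flat_map; exists i; split; [apply in_seq; lia|].
    apply in_map_iff; exists j; split; [reflexivity | apply in_seq; lia]. }
  induction (flat_map _ _) as [|c l IH]; [destruct Hin|].
  destruct Hin as [<- | Hin]; simpl; [apply Rmax_l|].
  eapply Rle_trans; [apply IH, Hin | apply Rmax_r].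
Qed.

Lemma length_hist f u b x0 k : length (hist f u b x0 k) = S k.
Proof. induction k; simpl; auto. Qed.

Lemma hd_hist f u b x0 k y : hd y (hist f u b x0 k) = traj f u b x0 k.
Proof. destruct k; reflexivity. Qed.

Lemma traj_S f u b x0 k : traj f u b x0 (S k) =
  fun i => proj01 (f (traj f u b x0 k) i + u (hist f u b x0 k) i + b k i).
Proof. unfold traj at 1; simpl; rewrite hd_hist; reflexivity. Qed.

Section Steering.

Variables (n : nat) (f : state -> nat -> R) (K : nat) (eta d : R).

(* The history x(t) :: ... :: x(0) has length t + 1, so steering towards 1/2
   happens at times t < K and the push apart at time K. *)
Definition steer (h : list state) (i : nat) : R :=
  if (length h <=? K)%nat then clamp (eta - d) (/2 - f (hd (fun _ => 0) h) i)
  else if (i =? 0)%nat then eta - d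
  else if (i =? 1)%nat then - (eta - d) else 0.

Hypothesis Hf : confined n f.
Hypothesis Hd : 0 <= d.
Hypothesis Hdeta : 2 * d <= eta.

Lemma steer_range h i : - (eta - d) <= steer h i <= eta - d.
Proof.
  unfold steer; destruct (_ <=? K)%nat; [apply clamp_range; lra|].
  destruct (i =? 0)%nat; [lra|]; destruct (i =? 1)%nat; lra.
Qed.

Variables (b : nat -> nat -> R) (x0 : state).

Hypothesis Hb : forall t i, (t <= K)%nat -> (i < n)%nat -> Rabs (b t i) <= d.
Hypothesis Hx0 : in_cube n x0.

Let x k := traj f steer b x0 k.

Lemma steer_near_half k i : (k <= K)%nat -> (i < n)%nat ->
  Rabs (x k i - /2) <= Rmax d (/2 - INR k * (eta - 2 * d)).
Proof.
  revert i; induction k as [|k IH]; intros i Hk Hi.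
  - specialize (Hx0 i Hi); unfold x, traj; simpl.
    eapply Rle_trans; [|apply Rmax_r]; split_Rabs; lra.
  - unfold x; rewrite traj_S.
    assert (Hsteer : steer (hist f steer b x0 k) i =
              clamp (eta - d) (/2 - f (x k) i)).
    { unfold steer at 1; rewrite length_hist, hd_hist.
      replace (S k <=? K)%nat with true by (symmetry; apply Nat.leb_le; lia).
      reflexivity. }
    rewrite Hsteer.
    eapply Rle_trans.
    + apply proj01_steer_half; try lra; [|apply Hb; lia].
      apply (confined_near_half n); auto.
      intros j Hj; apply IH; lia.
    + rewrite S_INR; unfold Rmax; repeat destruct Rle_dec; lra.
Qed.

Hypothesis HK : /2 < INR K * (eta - 2 * d).

Lemma steer_pushes_apart eps : 0 < eps < eta -> 3 * d <= eps -> (2 <= n)%nat ->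
  Rmin (2 * eta - 2 * eps) 1 <= Rabs (x (S K) 0%nat - x (S K) 1%nat).
Proof.
  intros Heps Hd3 Hn.
  assert (Hnear : forall i, (i < n)%nat -> Rabs (f (x K) i - /2) <= d).
  { intros i Hi; apply (confined_near_half n); auto.
    intros j Hj; eapply Rle_trans; [apply steer_near_half; auto|].
    rewrite Rmax_left; lra. }
  assert (Hpush : forall i, steer (hist f steer b x0 K) i =
     if (i =? 0)%nat then eta - d else if (i =? 1)%nat then - (eta - d) else 0).
  { intros i; unfold steer at 1; rewrite length_hist.
    replace (S K <=? K)%nat with false by (symmetry; apply Nat.leb_gt; lia).
    reflexivity. }
  unfold x; rewrite traj_S, !Hpush; simpl.
  apply (proj01_push_apart _ _ _ _ d eta eps); auto;
    first [apply Hnear | apply Hb]; lia.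
Qed.

End Steering.

Lemma confined_reachable n eta eps f :
  (2 <= n)%nat -> 0 < eps < eta -> confined n f ->
  robustly_reachable n eta f (E_c n (Rmin (2 * eta - 2 * eps) 1)).
Proof.
  intros Hn Heps Hf.
  set (d := eps / 3).
  destruct (INR_archimed (eta - 2 * d) (/2) ltac:(unfold d; lra)) as [K HK].
  exists (S K), d; split; [lia|]; split; [unfold d; lra|].
  intros x0 Hx0; right.
  exists (fun _ _ => d), (steer f K eta d); split.
  { intros h i; split; [unfold d; lra | apply steer_range; unfold d; lra]. }
  intros b Hb; exists (S K); split; [lia|]; split.
  - intros i Hi; rewrite traj_S; apply proj01_range.
  - apply Rle_ge; eapply Rle_trans; [|apply (max_diff_ge n _ 0 1); lia].
    apply (steer_pushes_apart n); unfold d in *; auto; try lra.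
    intros t i Ht Hi; apply Hb; lia.
Qed.

Theorem lemma4 (n : nat) (r omega : nat -> R) (eta eps : R) :
  (3 <= n)%nat ->
  (forall i, (i < n)%nat -> 0 < r i <= 1) ->
  (forall i, (i < n)%nat -> 0 < omega i < 1) ->
  0 < eta ->
  0 < eps < eta ->
  robustly_reachable n eta (proto_C1 n r) (E_c n (Rmin (2 * eta - 2 * eps) 1)) /\
  robustly_reachable n eta (proto_C3 n r omega) (E_c n (Rmin (2 * eta - 2 * eps) 1)).
Proof.
  intros Hn Hr Ho _ Heps.
  assert (Hr0 : forall i, (i < n)%nat -> 0 <= r i)
    by (intros i Hi; specialize (Hr i Hi); lra).
  split; apply confined_reachable; try lia; auto.
  - apply proto_C1_confined; auto.
  - apply proto_C3_confined; auto.
Qed.
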